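(* Let $\chi$ be a kernel satisfying $(\chi_2)$ with $\eta>0$ and $m_5(\chi)<\infty$. Then for every $f\in\mathcal{UB}^{\bar\omega}_+(\mathbb{R}_+)$ and every $w\ge1$, $$\|MG^{\chi}_w f-f\|_{\bar\omega}\le \frac{64\,\Omega(f,1/w)}{\eta}\big[m_0(\chi)+m_5(\chi)\big];$$ equivalently, for all $x>0$, $|MG^{\chi}_w(f,x)-f(x)|\le \frac{64(1+\log^2x)\Omega(f,1/w)}{\eta}[m_0(\chi)+m_5(\chi)]$.
   Context: $\mathbb{R}_+$ denotes the positive reals; $\bigvee_{k\in\Lambda}T_k=\sup\{T_k:k\in\Lambda\}$. A kernel is a bounded measurable $\chi:\mathbb{R}_+\to\mathbb{R}$. Moments: $m_{\nu}(\chi)=\sup_{u>0}\bigvee_{k\in\mathbb{Z}}|\chi(e^{-k}u)||k-\log u|^{\nu}$. Condition $(\chi_2)$: $\eta:=\inf_{x\in[1,e]}\chi(x)$ exists. Weight $\bar\omega(x)=\frac1{1+\log^2x}$, $\|f\|_{\bar\omega}=\sup_{x>0}\bar\omega(x)|f(x)|$. $\mathcal{UB}^{\bar\omega}_+(\mathbb{R}_+)$: nonnegative $f$ such that $\bar\omega f$ is bounded and log-uniformly continuous (for every $\epsilon>0$ there is $\delta>0$ with $|g(x)-g(y)|<\epsilon$ whenever $|\log x-\log y|\le\delta$). Weighted logarithmic modulus of continuity: $\Omega(f,\delta)=\sup_{|\log t|\le\delta,\ x>0}\frac{|f(tx)-f(x)|}{(1+\log^2x)(1+\log^2t)}$. Operator: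 $MG^{\chi}_w(f,x)=\frac{\bigvee_{k\in\mathbb{Z}}\chi(e^{-k}x^{w})f(e^{k/w})}{\bigvee_{k\in\mathbb{Z}}\chi(e^{-k}x^{w})}$. *)

From HB Require Import structures.
From mathcomp Require Import all_boot all_order all_algebra.
From mathcomp Require Import all_classical all_reals all_analysis.
Set Implicit Arguments. Unset Strict Implicit. Unset Printing Implicit Defensive.
Import Order.TTheory GRing.Theory Num.Theory.
Local Open Scope classical_set_scope.
Local Open Scope ring_scope.

Section Defs.
Variable R : realType.

Definition is_kernel (chi : R -> R) : Prop :=
  measurable_fun (`]0, +oo[%classic : set R) chi /\
  exists M : R, forall x : R, 0 < x -> `|chi x| <= M.

Definition moment (chi : R -> R) (nu : nat) : \bar R :=
  ereal_sup [set y : \bar R | exists (u : R) (k : int), 0 < u /\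
     y = (`|chi (expR (- k%:~R) * u)| * `|k%:~R - ln u| ^+ nu)%:E].

Definition eta_of (chi : R -> R) : R :=
  inf [set y : R | exists x : R, 1 <= x <= expR 1 /\ y = chi x].

Definition omega_bar (x : R) : R := 1 / (1 + ln x ^+ 2).

Definition wnorm (g : R -> R) : \bar R :=
  ereal_sup [set y : \bar R | exists x : R, 0 < x /\ y = (omega_bar x * `|g x|)%:E].

Definition log_unif_cont (g : R -> R) : Prop :=
  forall eps : R, 0 < eps -> exists delta : R, 0 < delta /\
    forall x y : R, 0 < x -> 0 < y -> `|ln x - ln y| <= delta -> `|g x - g y| < eps.

Definition UBplus (f : R -> R) : Prop :=
  (forall x : R, 0 < x -> 0 <= f x) /\
  (exists M : R, forall x : R, 0 < x -> `|omega_bar x * f x| <= M) /\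
  log_unif_cont (fun x => omega_bar x * f x).

Definition Omega (f : R -> R) (delta : R) : \bar R :=
  ereal_sup [set y : \bar R | exists t x : R, 0 < t /\ `|ln t| <= delta /\ 0 < x /\
     y = (`|f (t * x) - f x| / ((1 + ln x ^+ 2) * (1 + ln t ^+ 2)))%:E].

Definition MG (chi : R -> R) (w : R) (f : R -> R) (x : R) : R :=
  sup [set y : R | exists k : int, y = chi (expR (- k%:~R) * (x `^ w)) * f (expR (k%:~R / w))]
  / sup [set y : R | exists k : int, y = chi (expR (- k%:~R) * (x `^ w))].

End Defs.

From HB Require Import structures.
From mathcomp Require Import all_boot all_order all_algebra.
From mathcomp Require Import all_classical all_reals all_analysis.
From mathcomp Require Import ring lra.
Set Implicit Arguments. Unset Strict Implicit. Unset Printing Implicit Defensive.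
Import Order.TTheory GRing.Theory Num.Theory.
Local Open Scope classical_set_scope.
Local Open Scope ring_scope.

(* Write MG_w f x - f x as (sup_k chi_k f(e^(k/w)) - f x * sup_k chi_k) / sup_k chi_k with
   chi_k = chi (e^-k x^w).  The denominator is at least eta, because one shift e^-k x^w lies
   in [1, e].  The numerator is within sup_k |chi_k| |f(e^(k/w)) - f x| of zero; joining
   x to e^(k/w) by steps of logarithmic length at most 1/w and summing the weighted modulus
   bounds |f(e^(k/w)) - f x| by 16 Omega(f,1/w) (1 + log^2 x) (1 + |k - log x^w|^5), and the
   moments m_0 and m_5 absorb the factor |chi_k| (1 + |k - log x^w|^5). *)

Lemma mul1D_1Dsqr_le_pow5 (R : realDomainType) (d : R) :
  0 <= d -> (1 + d) * (1 + d ^+ 2) <= 4 * (1 + d ^+ 5).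
Proof.
move=> d_ge0; have d5_ge0 : 0 <= d ^+ 5 by rewrite exprn_ge0.
have le_1D_pow5 k : (k <= 5)%N -> d ^+ k <= 1 + d ^+ 5.
  move=> k_le5; case: (lerP d 1) => [d_le1|d_gt1].
  - by have := exprn_ile1 k d_ge0 d_le1; lra.
  - by have := ler_weXn2l (ltW d_gt1) k_le5; lra.
have := le_1D_pow5 1%N isT; have := le_1D_pow5 2%N isT; have := le_1D_pow5 3%N isT.
rewrite expr1; have -> : (1 + d) * (1 + d ^+ 2) = 1 + d + d ^+ 2 + d ^+ 3 by ring.
lra.
Qed.

Lemma mul_1Dsqr_shift_le (R : realDomainType) (a b h : R) : h ^+ 2 <= 1 ->
  (1 + (a + b) ^+ 2) * (1 + h ^+ 2) <= 4 * ((1 + a ^+ 2) * (1 + b ^+ 2)).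
Proof.
move=> h_le1; have ab2_ge0 : 0 <= (a + b) ^+ 2 by rewrite sqr_ge0.
have : 0 <= (a - b) ^+ 2 by rewrite sqr_ge0.
have : 0 <= a ^+ 2 * b ^+ 2 by rewrite mulr_ge0 // sqr_ge0.
nra.
Qed.

Lemma sup_approx_scaled (R : realType) (I : Type) (i0 : I) (a b : I -> R) (s c M : R) :
  0 <= s -> (forall i, b i <= M) -> (forall i, `|a i - s * b i| <= c) ->
  `|sup [set y | exists i, y = a i] - s * sup [set y | exists i, y = b i]| <= c.
Proof.
move=> s_ge0 b_leM ab_le.
set SA := [set y | exists i, y = a i]; set SB := [set y | exists i, y = b i].
have ab_itv i : - c <= a i - s * b i /\ a i - s * b i <= c.
  by apply/andP; rewrite -ler_norml.
have SB_ub : has_ubound SB by exists M => y [i ->].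
have b_le_sup i : b i <= sup SB by apply: ub_le_sup => //; exists i.
have SA_ub : has_ubound SA.
  exists (s * M + c) => y [i ->].
  by have := ab_itv i; have := ler_wpM2l s_ge0 (b_leM i); lra.
have a_le_sup i : a i <= sup SA by apply: ub_le_sup => //; exists i.
have supA_le : sup SA <= s * sup SB + c.
  apply: ge_sup => [|y [i ->]]; first by exists (a i0), i0.
  by have := ab_itv i; have := ler_wpM2l s_ge0 (b_le_sup i); lra.
have supA_ge : s * sup SB - c <= sup SA.
  have [s0|s_neq0] := eqVneq s 0.
    by have := ab_itv i0; have := a_le_sup i0; rewrite s0 !mul0r; lra.
  have s_gt0 : 0 < s by rewrite lt0r s_neq0.
  rewrite lerBlDr -ler_pdivlMl //.
  apply: ge_sup => [|y [i ->]]; first by exists (b i0), i0.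
  by rewrite ler_pdivlMl //; have := ab_itv i; have := a_le_sup i; lra.
by rewrite ler_norml; apply/andP; split; lra.
Qed.

Section LogModulus.
Variables (R : realType) (f : R -> R) (w Om : R).
Hypotheses (w_ge1 : 1 <= w) (Om_ge0 : 0 <= Om).
Hypothesis f_step : forall t z : R, 0 < t -> `|ln t| <= 1 / w -> 0 < z ->
  `|f (t * z) - f z| <= Om * ((1 + ln z ^+ 2) * (1 + ln t ^+ 2)).

Let w_gt0 : 0 < w. Proof. exact: lt_le_trans w_ge1. Qed.

Lemma log_modulus_chain (x h : R) (n : nat) : 0 < x -> `|h| <= 1 / w ->
  `|f (x * expR (n%:R * h)) - f x|
    <= n%:R * (4 * Om * (1 + ln x ^+ 2) * (1 + (n%:R * h) ^+ 2)).
Proof.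
move=> x_gt0 h_le; have h2_le1 : h ^+ 2 <= 1.
  rewrite -real_normK ?num_real // expr_le1 //.
  by apply: le_trans h_le _; rewrite mul1r invf_le1.
have C_ge0 : 0 <= 4 * Om * (1 + ln x ^+ 2) by rewrite !mulr_ge0 ?addr_ge0 ?sqr_ge0.
elim: n => [|n IHn]; first by rewrite mul0r expR0 mulr1 subrr normr0 mul0r.
set z := x * expR (n%:R * h).
have z_gt0 : 0 < z by rewrite mulr_gt0 ?expR_gt0.
have zE : x * expR (n.+1%:R * h) = expR h * z.
  by rewrite /z -natr1 mulrDl mul1r expRD; ring.
have sqr_le : (n%:R * h) ^+ 2 <= (n.+1%:R * h) ^+ 2.
  by rewrite !exprMn ler_wpM2r ?sqr_ge0 // lerXn2r ?nnegrE ?ler_nat.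
have step_le : `|f (expR h * z) - f z|
    <= 4 * Om * (1 + ln x ^+ 2) * (1 + (n.+1%:R * h) ^+ 2).
  have := f_step (expR_gt0 h); rewrite expRK => /(_ z h_le z_gt0).
  rewrite lnM ?posrE ?expR_gt0 // expRK => /le_trans; apply.
  have := ler_wpM2l Om_ge0 (mul_1Dsqr_shift_le (ln x) (n%:R * h) h2_le1).
  move=> /le_trans; apply.
  by rewrite !mulrA [Om * 4]mulrC ler_wpM2l // lerD2l.
have IH_le : n%:R * (4 * Om * (1 + ln x ^+ 2) * (1 + (n%:R * h) ^+ 2))
    <= n%:R * (4 * Om * (1 + ln x ^+ 2) * (1 + (n.+1%:R * h) ^+ 2)).
  by rewrite ler_wpM2l // ler_wpM2l // lerD2l.
rewrite zE; apply: le_trans (ler_distD (f z) _ _) _.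
apply: le_trans (lerD step_le (le_trans IHn IH_le)) _.
by rewrite -natr1; lra.
Qed.

(* Walk from ln x to ln y in N = floor (w |ln y - ln x|) + 1 equal steps, each of length <= 1/w. *)
Lemma log_modulus_growth (x y : R) : 0 < x -> 0 < y ->
  `|f y - f x| <= 16 * Om * (1 + ln x ^+ 2) * (1 + `|w * (ln y - ln x)| ^+ 5).
Proof.
move=> x_gt0 y_gt0; set L := ln y - ln x; set d := `|w * L|.
have d_ge0 : 0 <= d := normr_ge0 _.
have dE : d = w * `|L| by rewrite /d normrM ger0_norm // ltW.
have /andP[trunc_le trunc_gt] := trunc_itv d_ge0.
set N := (Num.trunc d).+1.
have N_gt0 : 0 < N%:R :> R by rewrite ltr0n.
have N_le : N%:R <= 1 + d :> R by rewrite /N -natr1; lra.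
have NhE : N%:R * (L / N%:R) = L by rewrite mulrC divfK ?gt_eqF.
have h_le : `|L / N%:R| <= 1 / w.
  rewrite normrM normfV normr_nat ler_pdivrMr // mul1r ler_pdivlMl //.
  by rewrite -dE ltW.
have := log_modulus_chain N x_gt0 h_le; rewrite NhE.
have -> : x * expR L = y by rewrite /L expRD expRN !lnK ?posrE // mulrC divfK ?gt_eqF.
move=> /le_trans; apply.
have L2_le : L ^+ 2 <= d ^+ 2.
  by rewrite -real_normK ?num_real // lerXn2r ?nnegrE // dE ler_peMl.
have : N%:R * (1 + L ^+ 2) <= 4 * (1 + d ^+ 5).
  apply: le_trans (mul1D_1Dsqr_le_pow5 d_ge0).
  by rewrite ler_pM ?addr_ge0 ?sqr_ge0 ?lerD2l.
have C_ge0 : 0 <= 4 * Om * (1 + ln x ^+ 2) by rewrite !mulr_ge0 ?addr_ge0 ?sqr_ge0.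
by move=> /(ler_wpM2l C_ge0); lra.
Qed.

End LogModulus.

Section MGError.
Variables (R : realType) (chi f : R -> R) (w Om A B eta M : R).
Hypotheses (w_ge1 : 1 <= w) (Om_ge0 : 0 <= Om) (eta_gt0 : 0 < eta).
Hypothesis f_ge0 : forall z, 0 < z -> 0 <= f z.
Hypothesis chi_le : forall z, 0 < z -> `|chi z| <= M.
Hypothesis chi_ge_eta : forall z, 1 <= z <= expR 1 -> eta <= chi z.
Hypothesis A_ub : forall (u : R) (k : int), 0 < u ->
  `|chi (expR (- k%:~R) * u)| * `|k%:~R - ln u| ^+ 0 <= A.
Hypothesis B_ub : forall (u : R) (k : int), 0 < u ->
  `|chi (expR (- k%:~R) * u)| * `|k%:~R - ln u| ^+ 5 <= B.
Hypothesis f_step : forall t z : R, 0 < t -> `|ln t| <= 1 / w -> 0 < z ->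
  `|f (t * z) - f z| <= Om * ((1 + ln z ^+ 2) * (1 + ln t ^+ 2)).

Let chi_shift_le (u : R) (k : int) : 0 < u -> chi (expR (- k%:~R) * u) <= M.
Proof.
by move=> u_gt0; apply: le_trans (ler_norm _) (chi_le _); rewrite mulr_gt0 ?expR_gt0.
Qed.

(* The shift k = floor (ln u) brings e^{-k} u into [1, e]. *)
Lemma eta_le_sup_kernel (u : R) : 0 < u ->
  eta <= sup [set y | exists k : int, y = chi (expR (- k%:~R) * u)].
Proof.
move=> u_gt0; have /andP[fl_le fl_gt] := floor_itv (ln u).
have shiftE : expR (- (Num.floor (ln u))%:~R) * u = expR (ln u - (Num.floor (ln u))%:~R).
  by rewrite addrC expRD lnK.
have : 1 <= expR (- (Num.floor (ln u))%:~R) * u <= expR 1.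
  rewrite shiftE -[X in X <= _ <= _]expR0 !ler_expR subr_ge0 fl_le /=.
  by move: fl_gt; rewrite intrD; lra.
move=> /chi_ge_eta /le_trans; apply; apply: ub_le_sup; last by eexists.
by exists M => y [k ->]; apply: chi_shift_le.
Qed.

Lemma MG_error_le (x : R) : 0 < x ->
  `|MG chi w f x - f x| <= 64 * (1 + ln x ^+ 2) / eta * Om * (A + B).
Proof.
move=> x_gt0; have w_gt0 : 0 < w by apply: lt_le_trans w_ge1.
set u := x `^ w; have u_gt0 : 0 < u by apply: powR_gt0.
pose c := 16 * Om * (1 + ln x ^+ 2) * (A + B).
have term_le (k : int) :
    `|chi (expR (- k%:~R) * u) * f (expR (k%:~R / w)) - f x * chi (expR (- k%:~R) * u)| <= c.
  rewrite [f x * _]mulrC -mulrBr normrM.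
  have := log_modulus_growth w_ge1 Om_ge0 f_step x_gt0 (expR_gt0 (k%:~R / w)).
  have -> : w * (ln (expR (k%:~R / w)) - ln x) = k%:~R - ln u.
    by rewrite expRK ln_powR mulrBr mulrC divfK ?gt_eqF.
  have := A_ub k u_gt0; have := B_ub k u_gt0; rewrite expr0 mulr1.
  move=> hB hA /(ler_wpM2l (normr_ge0 (chi (expR (- k%:~R) * u)))) /le_trans; apply.
  have K_ge0 : 0 <= 16 * Om * (1 + ln x ^+ 2) by rewrite !mulr_ge0 ?addr_ge0 ?sqr_ge0.
  by have := ler_wpM2l K_ge0 (lerD hA hB); rewrite /c; lra.
have num_le := sup_approx_scaled (0 : int) (f_ge0 x_gt0)
  (fun k : int => chi_shift_le k u_gt0) term_le.
have den_ge := eta_le_sup_kernel u_gt0.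
move: num_le den_ge; rewrite /MG -/u.
set Nn := sup _; set Dd := sup _ => num_le den_ge.
have Dd_gt0 : 0 < Dd := lt_le_trans eta_gt0 den_ge.
have -> : Nn / Dd - f x = (Nn - f x * Dd) / Dd by field; rewrite gt_eqF.
rewrite normrM normfV (gtr0_norm Dd_gt0).
have inv_le : Dd^-1 <= eta^-1 by rewrite lef_pV2 ?posrE.
apply: le_trans (ler_pM _ _ num_le inv_le) _ => //; first by rewrite invr_ge0 ltW.
have AB_ge0 : 0 <= A + B.
  apply: le_trans (lerD (A_ub 0 ltr01) (B_ub 0 ltr01)).
  by rewrite addr_ge0 ?mulr_ge0 ?exprn_ge0.
have X_ge0 : 0 <= Om * (1 + ln x ^+ 2) * (A + B) / eta.
  by rewrite divr_ge0 ?mulr_ge0 ?AB_ge0 ?addr_ge0 ?sqr_ge0 ?(ltW eta_gt0).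
by rewrite /c; lra.
Qed.

End MGError.

Section SupremumBounds.
Variable R : realType.
Implicit Types (chi f g : R -> R) (nu : nat).

Lemma moment_ub chi nu (u : R) (k : int) : 0 < u ->
  ((`|chi (expR (- k%:~R) * u)| * `|k%:~R - ln u| ^+ nu)%:E <= moment chi nu)%E.
Proof. by move=> u_gt0; apply: ereal_sup_ubound; exists u, k. Qed.

Lemma moment_ge0 chi nu : (0 <= moment chi nu)%E.
Proof.
apply: le_trans (moment_ub chi nu 0 ltr01).
by rewrite lee_fin mulr_ge0 ?exprn_ge0.
Qed.

Lemma moment0_le chi (M : R) : (forall x, 0 < x -> `|chi x| <= M) ->
  (moment chi 0 <= M%:E)%E.
Proof.
move=> chi_le; apply: ge_ereal_sup => _ [u [k [u_gt0 ->]]].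
by rewrite lee_fin expr0 mulr1 chi_le // mulr_gt0 ?expR_gt0.
Qed.

Lemma moment_finE chi nu : (moment chi nu < +oo)%E ->
  exists2 m : R, moment chi nu = m%:E &
    forall (u : R) (k : int), 0 < u ->
      `|chi (expR (- k%:~R) * u)| * `|k%:~R - ln u| ^+ nu <= m.
Proof.
move=> m_fin; exists (fine (moment chi nu)).
  by rewrite fineK // ge0_fin_numE ?moment_ge0.
by move=> u k u_gt0; rewrite -lee_fin fineK ?ge0_fin_numE ?moment_ge0 ?moment_ub.
Qed.

Lemma eta_of_le chi (M : R) (z : R) : (forall x, 0 < x -> `|chi x| <= M) ->
  1 <= z <= expR 1 -> eta_of chi <= chi z.
Proof.
move=> chi_le z_in; apply: ge_inf; last by exists z.
exists (- M) => _ [x [/andP[x_ge1 _] ->]].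
by have := chi_le x (lt_le_trans ltr01 x_ge1); rewrite ler_norml => /andP[].
Qed.

Lemma eta_of_le_moment0 chi (M : R) : (forall x, 0 < x -> `|chi x| <= M) ->
  ((eta_of chi)%:E <= moment chi 0)%E.
Proof.
move=> chi_le; apply: le_trans (moment_ub chi 0 0 ltr01).
rewrite oppr0 expR0 !mul1r expr0 mulr1 lee_fin; apply: le_trans (ler_norm _).
by apply: (eta_of_le (z := 1) chi_le); rewrite lexx /= -[X in X <= _]expR0 ler_expR.
Qed.

Lemma Omega_ub f (d t x : R) : 0 < t -> `|ln t| <= d -> 0 < x ->
  ((`|f (t * x) - f x| / ((1 + ln x ^+ 2) * (1 + ln t ^+ 2)))%:E <= Omega f d)%E.
Proof. by move=> t_gt0 t_le x_gt0; apply: ereal_sup_ubound; exists t, x. Qed.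

Lemma Omega_ge0 f (d : R) : 0 <= d -> (0 <= Omega f d)%E.
Proof.
move=> d_ge0; apply: le_trans (Omega_ub f ltr01 _ ltr01); last by rewrite ln1 normr0.
by rewrite lee_fin divr_ge0 ?mulr_ge0 ?addr_ge0 ?sqr_ge0.
Qed.

Lemma Omega_modulus f (d r : R) : Omega f d = r%:E ->
  forall t z : R, 0 < t -> `|ln t| <= d -> 0 < z ->
  `|f (t * z) - f z| <= r * ((1 + ln z ^+ 2) * (1 + ln t ^+ 2)).
Proof.
move=> Omega_E t z t_gt0 t_le z_gt0.
have := Omega_ub f t_gt0 t_le z_gt0; rewrite Omega_E lee_fin ler_pdivrMr //.
by rewrite mulr_gt0 // ltr_pwDl ?sqr_ge0.
Qed.

Lemma wnorm_le g (C : R) : (forall x, 0 < x -> `|g x| <= (1 + ln x ^+ 2) * C) ->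
  (wnorm g <= C%:E)%E.
Proof.
move=> g_le; apply: ge_ereal_sup => _ [x [x_gt0 ->]].
have P_gt0 : 0 < 1 + ln x ^+ 2 by rewrite ltr_pwDl ?sqr_ge0.
by rewrite lee_fin /omega_bar mul1r ler_pdivrMl ?g_le.
Qed.

End SupremumBounds.

Theorem theorem3p4 (R : realType) (chi : R -> R) :
  is_kernel chi -> 0 < eta_of chi -> (moment chi 5 < +oo)%E ->
  forall (f : R -> R) (w : R), UBplus f -> 1 <= w ->
    (wnorm (fun x => (MG chi w f x - f x)%R)
       <= (64 / eta_of chi)%:E * Omega f (1 / w) * (moment chi 0 + moment chi 5))%E /\
    (forall x : R, 0 < x ->
      ((`|MG chi w f x - f x|%R)%:E
        <= (64 * (1 + ln x ^+ 2) / eta_of chi)%:E * Omega f (1 / w)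
              * (moment chi 0 + moment chi 5))%E).
Proof.
move=> [_ [M chi_le]] eta_gt0 m5_fin f w [f_ge0 _] w_ge1.
have w_gt0 : 0 < w := lt_le_trans ltr01 w_ge1.
have [A A_E A_ub] := moment_finE (le_lt_trans (moment0_le chi_le) (ltry _)).
have [B B_E B_ub] := moment_finE m5_fin.
have := eta_of_le_moment0 chi_le; have := moment_ge0 chi 5.
rewrite A_E B_E -EFinD !lee_fin => B_ge0 eta_le_A.
case Omega_E : (Omega f (1 / w)) => [r||].
- have r_ge0 : 0 <= r by rewrite -lee_fin -Omega_E Omega_ge0 ?divr_ge0 ?ltW.
  have err_le (x : R) (x_gt0 : 0 < x) := MG_error_le w_ge1 r_ge0 eta_gt0 f_ge0 chi_le
    (fun z => eta_of_le chi_le) A_ub B_ub (Omega_modulus Omega_E) x_gt0.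
  split; last by move=> x x_gt0; rewrite -!EFinM lee_fin err_le.
  by apply: wnorm_le => x x_gt0; have := err_le x x_gt0; lra.
- have AB_gt0 : (0 < (A + B)%:E)%E by rewrite lte_fin; lra.
  split; [|move=> x x_gt0]; rewrite gt0_muley ?gt0_mulye ?leey // lte_fin.
    by rewrite divr_gt0.
  by rewrite divr_gt0 // mulr_gt0 // ltr_pwDl ?sqr_ge0.
- by have := Omega_ge0 f (ltW (divr_gt0 ltr01 w_gt0)); rewrite Omega_E.
Qed.
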